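(* Let $t$ be an odd prime and let $n$ be a nonnegative integer with $n\not\equiv 0\pmod t$. Then for every $0\leq i\leq t-1$, \[ M_t(i,t,n)=\frac{p_t(n)}{t},\qquad \overline{M}_t(i,t,n)=\frac{\overline{p}_t(n)}{t}\equiv 0\pmod 2,\qquad \hat{M}_t(i,t,n)=\frac{\hat{p}_t(n)}{t}. \] In particular, $p_t(n)\equiv \hat{p}_t(n)\equiv 0\pmod t$ and $\overline{p}_t(n)\equiv 0\pmod{2t}$.
   Context: An overpartition is a partition in which the first occurrence of each distinct part size may be overlined; a pod is a partition in which the odd parts are distinct. For a partition $\pi$ of any of these three kinds, $\ell(\pi)$ is its total number of parts (overlined and non-overlined, resp. odd and even). A $t$-colored partition (resp. overpartition, pod) of $n$ is a $t$-tuple $\overrightarrow{\pi}=(\pi_1,\dots,\pi_t)$ of ordinary partitions (resp. overpartitions, pods) whose parts sum in total to $n$; $p_t(n)$, $\overline{p}_t(n)$, $\hat{p}_t(n)$ denote the respective numbers. Define \[ r^{*}(\overrightarrow{\pi})=\sum_{k=1}^{(t-1)/2} k\bigl(\ell(\pi_k)-\ell(\pi_{t-k})\bigr). \] $M_t(i,t,n)$ (resp. $\overline{M}_t(i,t,n)$, $\hat{M}_t(i,t,n)$) denotes the number of $t$-colored partitions (resp. overpartitions, pods) of $n$ with $r^{*}$ congruent to $i$ modulo $t$. *)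

From mathcomp Require Import all_boot all_order all_algebra.
Set Implicit Arguments. Unset Strict Implicit. Unset Printing Implicit Defensive.
Import GRing.Theory Num.Theory.

(* One component (a partition / overpartition / pod of size <= n), encoded by
   multiplicities: for j : 'I_n, (c j).1 is the number of parts equal to j+1,
   and (c j).2 says whether (the first occurrence of) part size j+1 is
   overlined.  Every object of size <= n has exactly one such encoding
   (sizes, multiplicities are <= n). *)
Definition comp (n : nat) := {ffun 'I_n -> 'I_n.+1 * bool}.

Section Defs.
Variable n : nat.

Definition cweight (c : comp n) : nat := \sum_(j < n) j.+1 * (c j).1.
Definition clen (c : comp n) : nat := \sum_(j < n) (c j).1.

Definition is_part (c : comp n) : bool := [forall j, ~~ (c j).2].
Definition is_overpart (c : comp n) : bool :=
  [forall j, (c j).2 ==> (0 < (c j).1)].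
Definition is_pod (c : comp n) : bool :=
  is_part c && [forall j : 'I_n, odd j.+1 ==> ((c j).1 <= 1)].

Variable t : nat.

(* t-colored objects of total size n, each colour satisfying P.
   Colour k (1-based, as pi_k in the paper) is f (k-1). *)
Definition colored (P : pred (comp n)) : {set {ffun 'I_t -> comp n}} :=
  [set f : {ffun 'I_t -> comp n} |
     [forall k, P (f k)] && (\sum_(k < t) cweight (f k) == n)].

(* ell(pi_k) for 1-based k (0 if k is out of range) *)
Definition ellk (f : {ffun 'I_t -> comp n}) (k : nat) : nat :=
  \sum_(j < t | j.+1 == k) clen (f j).

Definition rstar (f : {ffun 'I_t -> comp n}) : int :=
  (\sum_(1 <= k < (t.-1)./2.+1)
     (k%:Z * ((ellk f k)%:Z - (ellk f (t - k))%:Z)))%R.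

Definition pcount (P : pred (comp n)) : nat := #|colored P|.

Definition Mcount (P : pred (comp n)) (i : nat) : nat :=
  #|[set f in colored P | ((rstar f %% (t%:Z)%R)%Z == (i%:Z)%R)]|.
End Defs.

From Pilot Require Import Defs.
From mathcomp Require Import all_boot all_order all_algebra zify ring.
Set Implicit Arguments. Unset Strict Implicit. Unset Printing Implicit Defensive.
Import GRing.Theory.

(* Put S(pi) = sum_k k * ell(pi_k).  As t is odd, r^*(pi) = S(pi) (mod t), so it
   suffices to show that S is equidistributed modulo t.  Let L_j be the total
   number of parts of size j over all colors; since n = sum_j j * L_j and t does
   not divide n, t does not divide some L_j.  Cyclically shifting the colors of
   the parts of size j by d lowers S by d * L_j (mod t); choosing d * L_j = -1
   (mod t) yields an injection raising S by one, hence all residue classes have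
   the same size.  For overpartitions, toggling the overline of the first
   occurring (color, part size) pair is a fixed-point-free involution that
   preserves S, so every class has even size. *)

Definition residue_class (T : finType) (A : {set T}) (s : T -> nat) (t i : nat) :=
  [set x in A | s x %% t == i].

Lemma card_residue_classes (T : finType) (A : {set T}) (s : T -> nat) t :
  0 < t -> #|A| = \sum_(i < t) #|residue_class A s t i|.
Proof.
move=> t_gt0; rewrite -sum1_card.
rewrite (partition_big (fun x => Ordinal (ltn_pmod (s x) t_gt0)) xpredT) //=.
apply: eq_bigr => i _; rewrite -sum1_card; apply: eq_bigl => x.
by rewrite !inE -val_eqE.
Qed.

Section ShiftedResidues.
Variables (T : finType) (A : {set T}) (s : T -> nat) (g : T -> T) (t : nat).
Hypotheses (t_gt0 : 0 < t) (gA : {in A, forall x, g x \in A})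
  (g_inj : {in A &, injective g})
  (s_g : {in A, forall x, s (g x) = (s x).+1 %[mod t]}).

Local Notation class := (residue_class A s t).

Lemma card_residue_class_leqS i : #|class i| <= #|class (i.+1 %% t)|.
Proof.
have classA : {subset class i <= A} by move=> x /setIdP[].
rewrite -(card_in_imset (sub_in2 classA g_inj)); apply: subset_leq_card.
apply/subsetP => _ /imsetP[x /setIdP[xA /eqP <-] ->].
by rewrite inE gA //= s_g //; apply/eqP; rewrite -[in RHS]addn1 modnDml addn1.
Qed.

Lemma card_residue_class_leq i k : i < t -> #|class i| <= #|class ((i + k) %% t)|.
Proof.
move=> lt_it; elim: k => [|k IHk]; first by rewrite addn0 modn_small.
apply: leq_trans IHk _; have := card_residue_class_leqS ((i + k) %% t).
by rewrite -[((i + k) %% t).+1]addn1 modnDml addn1 addnS.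
Qed.

Lemma card_residue_class i : i < t -> #|class i| * t = #|A|.
Proof.
move=> lt_it.
have class_eq j : j < t -> #|class j| = #|class i|.
  move=> lt_jt; apply/eqP; rewrite eqn_leq.
  have := card_residue_class_leq (t - j + i) lt_jt.
  have := card_residue_class_leq (t - i + j) lt_it.
  rewrite !addnA !subnKC ?(ltnW lt_it) ?(ltnW lt_jt) //.
  by rewrite !modnDl !modn_small // => -> ->.
rewrite (card_residue_classes A s t_gt0) (eq_bigr (fun=> #|class i|)).
  by rewrite sum_nat_const card_ord mulnC.
by move=> j _; exact: class_eq.
Qed.

End ShiftedResidues.

Lemma even_card_involution (T : finType) (A : {set T}) (g : T -> T) (b : pred T) :
  involutive g -> {in A, forall x, g x \in A} -> {in A, forall x, b (g x) = ~~ b x} ->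
  ~~ odd #|A|.
Proof.
move=> gK gA bg; set B := [set x | b x].
have card_leq (X Y : {set T}) : {in X, forall x, g x \in Y} -> #|X| <= #|Y|.
  move=> gXY; rewrite -(card_imset _ (can_inj gK)).
  by apply/subset_leq_card/subsetP => _ /imsetP[x xX ->]; exact: gXY.
have AB : #|A :&: B| = #|A :\: B|.
  apply/eqP; rewrite eqn_leq !card_leq // => x; rewrite !inE.
    by case/andP=> bx xA; rewrite gA // bg // bx.
  by case/andP=> xA bx; rewrite gA // bg // bx.
by rewrite -(cardsID B A) AB addnn odd_double.
Qed.

Lemma ord_gt0 m (c : 'I_m) : 0 < m.
Proof. exact: leq_ltn_trans (leq0n c) (ltn_ord c). Qed.

Definition ord_rot m (d : nat) (c : 'I_m) : 'I_m :=
  Ordinal (ltn_pmod (c + d) (ord_gt0 c)).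

Lemma ord_rot_inj m d : injective (@ord_rot m d).
Proof.
move=> x y /(congr1 val) /= /eqP; rewrite eqn_modDr !modn_small // => /eqP xy.
exact: val_inj.
Qed.

Lemma sum_ord_rot m d (F : 'I_m -> nat) :
  \sum_(c < m) F (ord_rot d c) = \sum_(c < m) F c.
Proof. by rewrite [RHS](reindex_inj (@ord_rot_inj m d)). Qed.

Section ColorRotation.
Variables t n : nat.
Local Notation coloring := {ffun 'I_t -> Defs.comp n}.

Definition part_mult (f : coloring) (j : 'I_n) : nat := \sum_(c < t) (f c j).1.

Definition color_moment (f : coloring) : nat := \sum_(c < t) c.+1 * clen (f c).

Definition rotate_colors (m : 'I_n) (d : nat) (f : coloring) : coloring :=
  [ffun c => [ffun j => if j == m then f (ord_rot d c) j else f c j]].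

Lemma sum_cweightE (f : coloring) :
  \sum_(c < t) cweight (f c) = \sum_(j < n) j.+1 * part_mult f j.
Proof.
by rewrite exchange_big; apply: eq_bigr => j _; rewrite big_distrr.
Qed.

Lemma color_momentE (f : coloring) :
  color_moment f = \sum_(j < n) \sum_(c < t) c.+1 * (f c j).1.
Proof.
by rewrite exchange_big; apply: eq_bigr => c _; rewrite big_distrr.
Qed.

Lemma part_mult_rotate m d f j : part_mult (rotate_colors m d f) j = part_mult f j.
Proof.
rewrite /part_mult; under eq_bigr => c _ do rewrite !ffunE.
by case: eqP => // ->; rewrite (sum_ord_rot d (fun c => (f c m).1)).
Qed.

Lemma sum_cweight_rotate m d f :
  \sum_(c < t) cweight (rotate_colors m d f c) = \sum_(c < t) cweight (f c).
Proof. by rewrite !sum_cweightE; apply: eq_bigr => j _; rewrite part_mult_rotate. Qed.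

Lemma color_moment_rotate m d f :
  color_moment (rotate_colors m d f) + d * part_mult f m = color_moment f %[mod t].
Proof.
rewrite !color_momentE (bigD1 m) // [in RHS](bigD1 m) //= -addnAC.
rewrite (eq_bigr (fun j => \sum_(c < t) c.+1 * (f c j).1)) => [|j /negbTE mj].
  2: by apply: eq_bigr => c _; rewrite !ffunE mj.
rewrite -modnDml -[in RHS]modnDml; congr ((_ + _) %% t).
rewrite -(part_mult_rotate m d f m) /part_mult big_distrr -big_split /=.
rewrite -(sum_ord_rot d (fun c => c.+1 * (f c m).1)) -modn_summ -[in RHS]modn_summ.
congr (_ %% t); apply: eq_bigr => c _; rewrite !ffunE eqxx -mulnDl.
by rewrite -modnMml -[in RHS]modnMml /= -[((c + d) %% t).+1]addn1 modnDml addn1 addSn.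
Qed.

Lemma rotate_colors_inj m d : injective (rotate_colors m d).
Proof.
move=> f g fg; apply/ffunP => c; apply/ffunP => j.
have [->|mj] := eqVneq j m.
  have := congr1 (fun h : coloring => h (invF (@ord_rot_inj t d) c) m) fg.
  by rewrite !ffunE eqxx f_invF.
by have := congr1 (fun h : coloring => h c j) fg; rewrite !ffunE (negbTE mj).
Qed.

Definition entrywise (P : pred (Defs.comp n)) :=
  exists Q : 'I_n -> 'I_n.+1 * bool -> bool, forall x, P x = [forall j, Q j (x j)].

Lemma rotate_colors_colored P m d f : entrywise P ->
  f \in colored t P -> rotate_colors m d f \in colored t P.
Proof.
case=> Q PQ; rewrite !inE sum_cweight_rotate => /andP[/forallP Pf ->].
rewrite andbT; apply/forallP => c; rewrite PQ; apply/forallP => j; rewrite !ffunE.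
by case: (j == m); [move: (Pf (ord_rot d c)) | move: (Pf c)]; rewrite PQ => /forallP.
Qed.

Definition first_nondiv_part (f : coloring) := [pick j | ~~ (t %| part_mult f j)].

Definition inverse_shift (L : nat) : nat :=
  if [pick d : 'I_t | t %| d * L + 1] is Some d then d else 0.

Definition color_step (f : coloring) : coloring :=
  if first_nondiv_part f is Some j then rotate_colors j (inverse_shift (part_mult f j)) f
  else f.

Lemma part_mult_step f j : part_mult (color_step f) j = part_mult f j.
Proof. by rewrite /color_step; case: first_nondiv_part => // k; rewrite part_mult_rotate. Qed.

Lemma first_nondiv_part_step f : first_nondiv_part (color_step f) = first_nondiv_part f.
Proof. by apply: eq_pick => j /=; rewrite part_mult_step. Qed.

Lemma inverse_shiftP L : prime t -> ~~ (t %| L) -> t %| inverse_shift L * L + 1.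
Proof.
move=> t_prime tL; rewrite /inverse_shift; case: pickP => [d //|no_d]; exfalso.
have t_gt0 := prime_gt0 t_prime.
have /(coprimeP _ t_gt0)[[u v] /= uv] : coprime t L by rewrite prime_coprime.
have := no_d (Ordinal (ltn_pmod v t_gt0)).
rewrite /= /dvdn -modnDml modnMml modnDml.
have -> : v * L + 1 = u * t by lia.
by rewrite modnMl.
Qed.

Lemma color_step_colored P f : entrywise P ->
  f \in colored t P -> color_step f \in colored t P.
Proof.
move=> eP fP; rewrite /color_step.
by case: first_nondiv_part => // j; exact: rotate_colors_colored.
Qed.

Section Step.
Hypotheses (t_prime : prime t) (t_ndvd_n : ~~ (t %| n)).

Lemma first_nondiv_part_colored P f : f \in colored t P ->
  exists2 j, first_nondiv_part f = Some j & ~~ (t %| part_mult f j).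
Proof.
rewrite inE => /andP[_ /eqP wf]; rewrite /first_nondiv_part.
case: pickP => [j tj|no_j]; first by exists j.
case/negP: t_ndvd_n; rewrite -wf sum_cweightE; apply: dvdn_sum => j _.
by apply: dvdn_mull; rewrite (negbFE (no_j j)).
Qed.

Lemma color_moment_step P f : f \in colored t P ->
  color_moment (color_step f) = (color_moment f).+1 %[mod t].
Proof.
move=> /first_nondiv_part_colored[j jf tj]; rewrite /color_step jf.
have /dvdnP[k dk] := inverse_shiftP t_prime tj.
rewrite -addn1 -modnDml -(color_moment_rotate j (inverse_shift (part_mult f j)) f).
by rewrite modnDml -addnA dk addnC modnMDl.
Qed.

Lemma color_step_inj P : {in colored t P &, injective color_step}.
Proof.
move=> f g fP _ fg; have [j jf _] := first_nondiv_part_colored fP.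
have jg : first_nondiv_part g = Some j.
  by rewrite -first_nondiv_part_step -fg first_nondiv_part_step.
have Lfg : part_mult f j = part_mult g j by rewrite -(part_mult_step f) fg part_mult_step.
by move: fg; rewrite /color_step jf jg Lfg; apply: rotate_colors_inj.
Qed.

Lemma card_residue_color_moment P i : entrywise P -> i < t ->
  #|residue_class (colored t P) color_moment t i| * t = pcount t P.
Proof.
move=> eP; apply: (@card_residue_class _ _ _ color_step) => [|f|f g|f].
- exact: prime_gt0.
- exact: color_step_colored.
- exact: color_step_inj.
- exact: color_moment_step.
Qed.

End Step.

End ColorRotation.

Lemma entrywise_part n : entrywise (@is_part n).
Proof. by exists (fun _ e => ~~ e.2). Qed.

Lemma entrywise_overpart n : entrywise (@is_overpart n).
Proof. by exists (fun _ (e : 'I_n.+1 * bool) => e.2 ==> (0 < e.1)). Qed.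

Lemma entrywise_pod n : entrywise (@is_pod n).
Proof.
exists (fun j (e : 'I_n.+1 * bool) => ~~ e.2 && (odd j.+1 ==> (e.1 <= 1))) => x.
apply/andP/forallP => [[/forallP part_x /forallP odd_x] j|pod_x].
  by rewrite part_x odd_x.
by split; apply/forallP => j; case/andP: (pod_x j).
Qed.

Lemma big_nat_reflect (V : nmodType) (F : nat -> V) h t : h <= t ->
  (\sum_(t - h <= k < t) F k = \sum_(1 <= k < h.+1) F (t - k)%N)%R.
Proof. by move=> le_ht; rewrite big_rev_mkord subKn // big_add1 big_mkord. Qed.

Lemma moment_reflect (l : nat -> int) h t : t = h.*2.+1 ->
  (\sum_(1 <= k < t.+1) k%:Z * l k
   = \sum_(1 <= k < h.+1) k%:Z * (l k - l (t - k)%N)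
     + t%:Z * (\sum_(1 <= k < h.+1) l (t - k)%N + l t))%R.
Proof.
move=> t_eq; have le_ht : h <= t by rewrite t_eq -addnn; lia.
have t_gt0 : 0 < t by rewrite t_eq.
rewrite big_nat_recr // (@big_cat_nat _ _ _ h.+1) //=; last by rewrite t_eq; lia.
have := big_nat_reflect (fun k => (k%:Z * l k)%R) le_ht.
rewrite (_ : t - h = h.+1); last by rewrite t_eq; lia.
move=> ->; rewrite mulrDr addrA mulr_sumr -!big_split /=; congr (_ + _)%R.
apply: eq_big_nat => k /andP[_ le_kh]; rewrite -subzn; first by ring.
by rewrite t_eq; lia.
Qed.

Lemma color_moment_ellk t n (f : {ffun 'I_t -> Defs.comp n}) :
  color_moment f = \sum_(1 <= k < t.+1) k * ellk f k.
Proof.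
rewrite big_add1 big_mkord; apply: eq_bigr => c _; congr (_ * _).
by rewrite /ellk (eq_bigl (pred1 c)) ?big_pred1_eq.
Qed.

Lemma rstar_modz t n (f : {ffun 'I_t -> Defs.comp n}) :
  odd t -> (rstar f %% t)%Z = (color_moment f %% t)%N.
Proof.
move=> t_odd; have := odd_double_half t; rewrite t_odd add1n => t_eq.
rewrite /rstar (_ : (t.-1)./2 = t./2); last by rewrite -{1}t_eq /= doubleK.
have := moment_reflect (fun k => Posz (ellk f k)) (esym t_eq).
rewrite -(big_morph Posz PoszD (erefl (Posz 0))) => key.
by rewrite color_moment_ellk -modz_nat key addrC mulrC modzMDl.
Qed.

Lemma Mcount_residue_class t n (P : pred (Defs.comp n)) i : odd t ->
  Mcount t P i = #|residue_class (colored t P) (@color_moment t n) t i|.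
Proof. by move=> t_odd; apply: eq_card => f; rewrite !inE rstar_modz // eqz_nat. Qed.

Section OverlineToggle.
Variables t n : nat.
Local Notation coloring := {ffun 'I_t -> Defs.comp n}.

Definition first_part (f : coloring) := [pick p : 'I_t * 'I_n | 0 < (f p.1 p.2).1].

Definition toggle_overline (p : 'I_t * 'I_n) (f : coloring) : coloring :=
  [ffun c => [ffun j => if (c, j) == p then ((f c j).1, ~~ (f c j).2) else f c j]].

Definition toggle_first (f : coloring) : coloring :=
  if first_part f is Some p then toggle_overline p f else f.

Definition first_overlined (f : coloring) : bool :=
  if first_part f is Some p then (f p.1 p.2).2 else false.

Lemma first_partP f p : first_part f = Some p -> 0 < (f p.1 p.2).1.
Proof. by rewrite /first_part; case: pickP => // q q_pos [<-]. Qed.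

Lemma toggle_first_mult f c j : (toggle_first f c j).1 = (f c j).1.
Proof. by rewrite /toggle_first; case: first_part => // p; rewrite !ffunE; case: ifP. Qed.

Lemma first_part_toggle f : first_part (toggle_first f) = first_part f.
Proof. by apply: eq_pick => p /=; rewrite toggle_first_mult. Qed.

Lemma toggle_firstK : involutive toggle_first.
Proof.
move=> f; rewrite {1}/toggle_first first_part_toggle /toggle_first.
case: first_part => // p; apply/ffunP => c; apply/ffunP => j; rewrite !ffunE.
by case: ((c, j) == p) => //=; case: (f c j) => ? [].
Qed.

Lemma first_overlined_toggle f :
  first_part f != None -> first_overlined (toggle_first f) = ~~ first_overlined f.
Proof.
rewrite /first_overlined first_part_toggle /toggle_first.
by case: first_part => // p _; rewrite !ffunE -surjective_pairing eqxx.
Qed.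

Lemma color_moment_toggle f : color_moment (toggle_first f) = color_moment f.
Proof.
rewrite !color_momentE; apply: eq_bigr => j _.
by apply: eq_bigr => c _; rewrite toggle_first_mult.
Qed.

Lemma toggle_first_colored f :
  f \in colored t (@is_overpart n) -> toggle_first f \in colored t (@is_overpart n).
Proof.
rewrite !inE => /andP[/forallP over_f wf].
have -> : \sum_(c < t) cweight (toggle_first f c) = \sum_(c < t) cweight (f c).
  by apply: eq_bigr => c _; apply: eq_bigr => j _; rewrite toggle_first_mult.
rewrite wf andbT; apply/forallP => c; apply/forallP => j; rewrite toggle_first_mult.
rewrite /toggle_first; case E: first_part => [p|]; last exact: (forallP (over_f c)).
rewrite !ffunE; case: eqP => [cj_p|_]; last exact: (forallP (over_f c)).
by move: E; rewrite -cj_p => /first_partP ->; rewrite implybT.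
Qed.

Lemma first_part_colored P f : 0 < n -> f \in colored t P -> first_part f != None.
Proof.
move=> n_gt0; rewrite inE => /andP[_ /eqP wf]; rewrite /first_part.
case: pickP => // no_part; move: n_gt0; rewrite -wf big1 // => c _.
rewrite /cweight big1 // => j _; have := no_part (c, j).
by rewrite lt0n /= => /negbFE/eqP ->; rewrite muln0.
Qed.

Lemma Mcount_overpart_even i : odd t -> 0 < n -> ~~ odd (Mcount t (@is_overpart n) i).
Proof.
move=> t_odd n_gt0; rewrite Mcount_residue_class //.
apply: (even_card_involution (g := toggle_first) (b := first_overlined)) => [|f|f].
- exact: toggle_firstK.
- move=> /setIdP[f_col f_i]; apply/setIdP; split; first exact: toggle_first_colored.
  by rewrite color_moment_toggle.
- move=> /setIdP[f_col _].
  by rewrite first_overlined_toggle // (first_part_colored n_gt0 f_col).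
Qed.

End OverlineToggle.

Theorem theorem2p5 (t n : nat) :
  prime t -> odd t -> ~~ (t %| n) ->
  forall i : nat, i < t ->
    (Mcount t (@is_part n) i * t = pcount t (@is_part n))
    /\ (Mcount t (@is_overpart n) i * t = pcount t (@is_overpart n))
    /\ ~~ odd (Mcount t (@is_overpart n) i)
    /\ (Mcount t (@is_pod n) i * t = pcount t (@is_pod n))
    /\ (t %| pcount t (@is_part n))
    /\ (t %| pcount t (@is_pod n))
    /\ (2 * t %| pcount t (@is_overpart n)).
Proof.
move=> t_prime t_odd t_ndvd_n i lt_it.
have n_gt0 : 0 < n by rewrite lt0n; apply: contraNneq t_ndvd_n => ->.
have Mcount_mul (P : pred (Defs.comp n)) : entrywise P -> Mcount t P i * t = pcount t P.
  move=> eP; rewrite Mcount_residue_class //.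
  exact: card_residue_color_moment.
have part := Mcount_mul _ (@entrywise_part n).
have over := Mcount_mul _ (@entrywise_overpart n).
have pod := Mcount_mul _ (@entrywise_pod n).
have over_even := Mcount_overpart_even i t_odd n_gt0.
do !split => //.
- by rewrite -part dvdn_mull.
- by rewrite -pod dvdn_mull.
- by rewrite -over dvdn_pmul2r ?prime_gt0 ?dvdn2.
Qed.
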